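(* Let $(H,L_H)$ be a right-resolving, regular and follower-separated labeled graph. Then $(H,L_H)$ is predecessor-separated.
   Context: A labeled graph $(H,L_H)$: finite directed graph (vertices $V_H$, edges $E_H$, source/terminal maps $s_H,t_H$) without sinks or sources, labeling $L_H:E_H\to A$, edge shift $X_H$; $L_H$ acts coordinatewise; it presents $Y=L_H(X_H)$. Right-resolving: distinct edges with the same source have distinct labels. $f_H(v)=\{L_H(x): x$ a right-infinite path starting at $v\}$; $p_H(v)=\{L_H(z): z=\cdots z_{-2}z_{-1}$ a left-infinite path whose last edge ends at $v\}$. For $y\in Y$, $F(y)=\{w\in Y[0,\infty): y_{(-\infty,-1]}w\in Y\}$ with $Y[0,\infty)=\{y_{[0,\infty)}:y\in Y\}$. A vertex $v$ is regular if there is $z\in X_H$ whose edge $z_{-1}$ ends at $v$ with $f_H(v)=F(L_H(z))$; the graph is regular if all vertices are. Follower-separated: $f_H(v)=f_H(w)\Rightarrow v=w$. Predecessor-separated: $p_H(v)=p_H(w)\Rightarrow v=w$. *)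

From mathcomp Require Import all_boot all_order all_algebra.
Set Implicit Arguments. Unset Strict Implicit. Unset Printing Implicit Defensive.
Import Order.TTheory GRing.Theory Num.Theory.
Local Open Scope ring_scope.

Section LabeledGraph.
Variables (V E : finType) (A : Type) (s t : E -> V) (L : E -> A).

Definition no_sinks_sources : Prop :=
  (forall v : V, exists e : E, s e = v) /\ (forall v : V, exists e : E, t e = v).

Definition in_edge_shift (x : int -> E) : Prop :=
  forall i : int, t (x i) = s (x (i + 1)).

Definition in_Y (y : int -> A) : Prop :=
  exists x : int -> E, in_edge_shift x /\ forall i : int, y i = L (x i).

Definition in_Y_right (w : nat -> A) : Prop :=
  exists y : int -> A, in_Y y /\ forall n : nat, w n = y (Posz n).

Definition right_path_from (v : V) (x : nat -> E) : Prop :=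
  s (x 0%N) = v /\ forall n : nat, t (x n) = s (x n.+1).

(* left-infinite path ... z_{-2} z_{-1} ending at v; z n encodes z_{-1-n} *)
Definition left_path_to (v : V) (z : nat -> E) : Prop :=
  t (z 0%N) = v /\ forall n : nat, t (z n.+1) = s (z n).

Definition follower (v : V) (w : nat -> A) : Prop :=
  exists x : nat -> E, right_path_from v x /\ forall n : nat, w n = L (x n).

(* predecessor set p_H(v); the word u encodes ... u_{-2} u_{-1} with u n = u_{-1-n} *)
Definition predecessor (v : V) (u : nat -> A) : Prop :=
  exists z : nat -> E, left_path_to v z /\ forall n : nat, u n = L (z n).

Definition concat_left (y : int -> A) (w : nat -> A) : int -> A :=
  fun i => if i < 0 then y i else w `|i|%N.

Definition future (y : int -> A) (w : nat -> A) : Prop :=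
  in_Y_right w /\ in_Y (concat_left y w).

Definition same_set (T : Type) (P Q : T -> Prop) : Prop := forall a, P a <-> Q a.

Definition regular_vertex (v : V) : Prop :=
  exists z : int -> E, in_edge_shift z /\ t (z (-1)) = v /\
    same_set (follower v) (future (fun i => L (z i))).

Definition regular_graph : Prop := forall v : V, regular_vertex v.

Definition right_resolving : Prop :=
  forall e e' : E, s e = s e' -> L e = L e' -> e = e'.

Definition follower_separated : Prop :=
  forall v w : V, same_set (follower v) (follower w) -> v = w.

Definition predecessor_separated : Prop :=
  forall v w : V, same_set (predecessor v) (predecessor w) -> v = w.

End LabeledGraph.

(* Let z witness the regularity of v and y = L(z).  If p(v) is contained in
   p(w), the left half of y is the label of a left-infinite path into w;
   gluing it to any right-infinite path out of w gives a point of X_H, so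
   every follower of w lies in F(y) = f(v).  By symmetry p(v) = p(w) forces
   f(v) = f(w), and follower-separation gives v = w. *)
From mathcomp Require Import all_boot all_order all_algebra.
Set Implicit Arguments.
Unset Strict Implicit.
Unset Printing Implicit Defensive.
Import Order.TTheory GRing.Theory Num.Theory.
Local Open Scope ring_scope.

Lemma PoszS_addr1 (n : nat) : Posz n + 1 = Posz n.+1.
Proof. by rewrite -addn1 PoszD. Qed.

Lemma NegzS_addr1 (n : nat) : Negz n.+1 + 1 = Negz n.
Proof. by rewrite !NegzE -addn1 PoszD opprD addrK. Qed.

Section Gluing.
Variables (V E : finType) (A : Type) (s t : E -> V) (L : E -> A).

(* [Negz n] is the index [-1-n], matching the encoding of left paths. *)
Definition glue (z x : nat -> E) (i : int) : E :=
  match i with Posz n => x n | Negz n => z n end.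

Lemma left_path_of_shift (z : int -> E) :
  in_edge_shift s t z -> left_path_to s t (t (z (-1))) (fun n => z (Negz n)).
Proof. by move=> hz; split=> // n; rewrite hz NegzS_addr1. Qed.

Lemma glue_in_edge_shift (v : V) (z x : nat -> E) :
  left_path_to s t v z -> right_path_from s t v x -> in_edge_shift s t (glue z x).
Proof.
move=> [hz0 hz] [hx0 hx] [n | [|n]].
- by rewrite PoszS_addr1 /= hx.
- by rewrite /= hz0 hx0.
- by rewrite NegzS_addr1 /= hz.
Qed.

Lemma follower_sub_future (w : V) (y : int -> A) :
  predecessor s t L w (fun n => y (Negz n)) ->
  forall a, follower s t L w a -> future s t L y a.
Proof.
move=> [z [hz hzy]] a [x [hx hxa]].
have hzx := glue_in_edge_shift hz hx.
split; first by exists (fun i => L (glue z x i)); split=> //; exists (glue z x).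
by exists (glue z x); split=> // -[n | n]; rewrite /concat_left /=.
Qed.

Lemma follower_sub_of_predecessor_sub (v w : V) :
  regular_vertex s t L v ->
  (forall u, predecessor s t L v u -> predecessor s t L w u) ->
  forall a, follower s t L w a -> follower s t L v a.
Proof.
move=> [z [hz [hzv fv_future]]] pvw a /follower_sub_future fw_future.
apply/fv_future/fw_future/pvw.
by exists (fun n => z (Negz n)); rewrite -hzv; split=> //; exact: left_path_of_shift.
Qed.

End Gluing.

Theorem lemma3p4 (V E : finType) (A : Type) (s t : E -> V) (L : E -> A) :
  no_sinks_sources s t ->
  right_resolving s L ->
  regular_graph s t L ->
  follower_separated s t L ->
  predecessor_separated s t L.
Proof.
move=> _ _ reg fsep v w pvw; apply: fsep => a; split.
- by apply: follower_sub_of_predecessor_sub (reg w) _ a => u /pvw.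
- by apply: follower_sub_of_predecessor_sub (reg v) _ a => u /pvw.
Qed.
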